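(* Every exact nontrivial linked chain of finite support is equivalent to $\mathfrak{u}(\mathbf{r})$ for a unique tuple $\mathbf{r}$.
   Context: Let $k$ be a field; all vector spaces are finite-dimensional over $k$. Let $\mathcal{Z}$ be the quiver with vertex set $\mathbb Z$ and, for each $i\in\mathbb Z$, an arrow $\alpha^i\colon i\to i+1$ and an arrow $\alpha_i\colon i+1\to i$. A representation of $\mathcal Z$ is written $\mathfrak{u}=(U_i,u_i,u^i)_{i\in\mathbb Z}$ with $u^i\colon U_i\to U_{i+1}$ and $u_i\colon U_{i+1}\to U_i$. For $i,j\in\mathbb Z$ put $u^i_i=\mathrm{Id}_{U_i}$, $u^i_j=u^{j-1}\circ\cdots\circ u^i$ if $j>i$, and $u^i_j=u_j\circ u_{j+1}\circ\cdots\circ u_{i-1}$ if $j<i$. The representation $\mathfrak{u}$ is a linked chain if for each $i\in\mathbb Z$: $u_i\circ u^i=0$, $u^i\circ u_i=0$, and $\ker(u_{i-1})\cap\ker(u^i)=0$. It is exact if $\ker(u^i)=\mathrm{Im}(u_i)$ and $\ker(u_i)=\mathrm{Im}(u^i)$ for each $i$; nontrivial if $U_i\neq 0$ for every $i$; and it has finite support if there is a finite $H\subseteq\mathbb Z$ such that for each $i\in\mathbb Z$ there is $j\in H$ with $u^j_i$ surjective. ''Equivalent'' means isomorphic as representations up to translation, i.e. identifying $\mathfrak{u}$ with $\mathfrak{u}[t]=(U_{t+i},u_{t+i},u^{t+i})_{i\in\mathbb Z}$ for every $t\in\mathbb Z$. For $d\geq 0$ and a tuple $\mathbf{r}=(r_0,\dots,r_d)$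 of nonnegative integers with $r_0,r_d\neq 0$, let $R_i=r_0+\cdots+r_i$, $S_i=r_{i+1}+\cdots+r_d$, and $r=R_d$. Define $\mathfrak{u}(\mathbf{r})=(U_i,u_i,u^i)_{i\in\mathbb Z}$ by $U_i=k^r$ (canonical basis) for all $i$, where $u^i\colon U_i\to U_{i+1}$ is the zero matrix if $i<0$, the identity if $i\geq d$, and $\mathrm{diag}(I_{R_i},0_{S_i})$ for $0\leq i<d$; and $u_i\colon U_{i+1}\to U_i$ is the zero matrix if $i\geq d$, the identity if $i<0$, and $\mathrm{diag}(0_{R_i},I_{S_i})$ for $0\leq i<d$ (here $0_a$, $I_a$ are the $a\times a$ zero and identity matrices). Then $\mathfrak{u}(\mathbf{r})$ is an exact nontrivial linked chain of pure dimension $r$ with minimal support $\{0,\dots,d\}$. *)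

From HB Require Import structures.
From mathcomp Require Import all_boot all_order all_algebra.
Set Implicit Arguments. Unset Strict Implicit. Unset Printing Implicit Defensive.
Import Order.TTheory GRing.Theory Num.Theory.
Local Open Scope ring_scope.

(* A finite-dimensional
   vector space U_i is represented by k^(dim i) (row vectors), a linear map
   U -> V by a matrix acting on the right: v |-> v *m A. *)
Record zrep (k : fieldType) := ZRep {
  dim : int -> nat;
  up : forall i : int, 'M[k]_(dim i, dim (i + 1));      (* u^i : U_i -> U_{i+1} *)
  dn : forall i : int, 'M[k]_(dim (i + 1), dim i)       (* u_i : U_{i+1} -> U_i *)
}.

Lemma addz_S (j : int) (n : nat) : j + n%:Z + 1 = j + (n.+1)%:Z.
Proof. by rewrite -addrA -PoszD addn1. Qed.

Section ZRepDefs.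
Variable k : fieldType.
Implicit Types u v : zrep k.

Fixpoint uppath u (j : int) (n : nat) : 'M[k]_(dim u j, dim u (j + n%:Z)) :=
  match n return 'M[k]_(dim u j, dim u (j + n%:Z)) with
  | 0 => castmx (erefl, congr1 (dim u) (esym (addr0 j))) 1%:M
  | n'.+1 => castmx (erefl, congr1 (dim u) (addz_S j n'))
                    (uppath u j n' *m up u (j + n'%:Z))
  end.

Fixpoint dnpath u (j : int) (n : nat) : 'M[k]_(dim u (j + n%:Z), dim u j) :=
  match n return 'M[k]_(dim u (j + n%:Z), dim u j) with
  | 0 => castmx (congr1 (dim u) (esym (addr0 j)), erefl) 1%:M
  | n'.+1 => castmx (congr1 (dim u) (addz_S j n'), erefl)
                    (dn u (j + n'%:Z) *m dnpath u j n')
  end.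

Definition comp_surj u (j i : int) : Prop :=
  exists n : nat,
    (i = j + n%:Z /\ row_full (uppath u j n)) \/
    (j = i + n%:Z /\ row_full (dnpath u i n)).

Definition linked_chain u : Prop :=
  [/\ forall i, up u i *m dn u i = 0,
      forall i, dn u i *m up u i = 0 &
      (* ker(u_{i-1}) /\ ker(u^i) = 0 in U_i, written at index i+1 *)
      forall i, \rank (kermx (dn u i) :&: kermx (up u (i + 1)))%MS = 0%N].

Definition exact_rep u : Prop :=
  forall i, (kermx (up u i) == dn u i)%MS /\ (kermx (dn u i) == up u i)%MS.

Definition nontrivial u : Prop := forall i, dim u i != 0%N.

Definition finite_support u : Prop :=
  exists H : seq int, forall i, exists2 j, j \in H & comp_surj u j i.

Definition shift u (t : int) : zrep k :=
  @ZRep k (fun i => dim u (t + i))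
    (fun i => castmx (erefl, congr1 (dim u) (esym (addrA t i 1))) (up u (t + i)))
    (fun i => castmx (congr1 (dim u) (esym (addrA t i 1)), erefl) (dn u (t + i))).

Definition rep_iso u v : Prop :=
  exists phi : forall i, 'M[k]_(dim u i, dim v i),
    [/\ forall i, row_free (phi i) && row_full (phi i),
        forall i, phi i *m up v i = up u i *m phi (i + 1) &
        forall i, phi (i + 1) *m dn v i = dn u i *m phi i].

Definition equivalent u v : Prop := exists t : int, rep_iso u (shift v t).

Definition valid_tuple (r : seq nat) : bool :=
  [&& (0 < size r)%N, head 0%N r != 0%N & last 0%N r != 0%N].

Definition tdeg (r : seq nat) : nat := (size r).-1.
Definition Rsum (r : seq nat) (n : nat) : nat := \sum_(0 <= l < n.+1) nth 0%N r l.
Definition rtot (r : seq nat) : nat := Rsum r (tdeg r).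

(* diagonal pattern of u^i : zero for i<0, identity for i>=d, diag(I_{R_i},0_{S_i}) *)
Definition up_diag (r : seq nat) (i : int) (a : nat) : bool :=
  match i with
  | Posz n => if (tdeg r <= n)%N then true else (a < Rsum r n)%N
  | Negz _ => false
  end.
(* diagonal pattern of u_i : identity for i<0, zero for i>=d, diag(0_{R_i},I_{S_i}) *)
Definition dn_diag (r : seq nat) (i : int) (a : nat) : bool :=
  match i with
  | Posz n => if (tdeg r <= n)%N then false else (Rsum r n <= a)%N
  | Negz _ => true
  end.

Definition urep (r : seq nat) : zrep k :=
  @ZRep k (fun _ => rtot r)
    (fun i => \matrix_(a, b) ((a == b) && up_diag r i a)%:R)
    (fun i => \matrix_(a, b) ((a == b) && dn_diag r i a)%:R).

End ZRepDefs.

From Pilot Require Import Defs.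
From mathcomp Require Import all_boot all_order all_algebra.
From mathcomp Require Import zify.
Set Implicit Arguments. Unset Strict Implicit. Unset Printing Implicit Defensive.
Import Order.TTheory GRing.Theory Num.Theory.
Local Open Scope ring_scope.

(* Exactness gives dim U_i = rank u^i + rank u_i = dim U_(i+1), so all U_i have
   one dimension n.  Inside U_i the images Im u^(i-1) and Im u_i meet trivially
   (linked chain), so a_i := rank u^i satisfies
   dim (Im u^(i-1) + Im u_i) = a_(i-1) + n - a_i <= n; hence a is nondecreasing,
   and finite support makes it 0 far to the left and n far to the right.  Let t
   be the first index with a_t > 0 and t + d the first with a_(t+d) = n.  A
   complement C_i of Im u^(i-1) + Im u_i has dimension a_i - a_(i-1); putting
   r_l := dim C_(t+l) and sending the l-th block of coordinates of k^r onto a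
   basis of C_(t+l), carried to U_i along the chain, intertwines u(r)[-t] with u.
   These maps are onto, by induction from both ends using
   U_i = Im u^(i-1) + Im u_i + C_i.  Conversely rank u^i = R_(i-t) is an
   isomorphism invariant, and the partial sums R determine both t and r. *)

Lemma int_ind_up (K : int) (P : int -> Prop) :
  (forall i, i <= K -> P i) -> (forall i, P i -> P (i + 1)) -> forall i, P i.
Proof.
move=> Pbelow PS i; case: (lerP i K) => [/Pbelow //|ltKi].
have -> : i = K + `|i - K|%N%:Z by rewrite gez0_abs ?subr_ge0 ?ltW //; lia.
elim: `|i - K|%N => [|m IHm]; first by rewrite addr0; apply: Pbelow.
by rewrite -addz_S; apply: PS.
Qed.

Lemma int_ind_down (K : int) (P : int -> Prop) :
  (forall i, K <= i -> P i) -> (forall i, P (i + 1) -> P i) -> forall i, P i.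
Proof.
move=> Pabove PS i; case: (lerP K i) => [/Pabove //|ltiK].
have -> : i = K - `|K - i|%N%:Z by rewrite gez0_abs ?subr_ge0 ?ltW //; lia.
elim: `|K - i|%N => [|m IHm]; first by rewrite subr0; apply: Pabove.
by apply: PS; have -> : K - m.+1%:Z + 1 = K - m%:Z by lia.
Qed.

Lemma lez_addn (i j : int) : i <= j -> exists m : nat, j = i + m%:Z.
Proof. by move=> leij; exists `|j - i|%N; rewrite gez0_abs ?subr_ge0 //; lia. Qed.

Lemma step_invariant_const (T : Type) (f : int -> T) :
  (forall i, f (i + 1) = f i) -> forall i, f i = f 0.
Proof.
move=> fS i; elim/int_rect: i => [//|m <-|m <-].
  by rewrite -(fS m); congr f; lia.
by rewrite -(fS (- m.+1%:Z)); congr f; lia.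
Qed.

Lemma step_homo_leq (a : int -> nat) :
  (forall i, (a i <= a (i + 1)%R)%N) -> forall i j, i <= j -> (a i <= a j)%N.
Proof.
move=> aS i j /lez_addn[m ->]; elim: m => [|m IHm]; first by rewrite addr0.
by apply: leq_trans IHm _; rewrite -addz_S.
Qed.

Definition step_window (a : int -> nat) (n : nat) (t : int) (d : nat) : Prop :=
  [/\ forall i, i < t -> a i = 0%N, (0 < a t)%N,
      forall i, t + d%:Z <= i -> a i = n & (0 < d)%N -> (a (t + d%:Z - 1)%R < n)%N].

Lemma exists_step_window (a : int -> nat) (n B : nat) :
  (forall i, (a i <= a (i + 1)%R)%N) -> (forall i, (a i <= n)%N) -> (0 < n)%N ->
  (forall i, i < - B%:Z -> a i = 0%N) -> (forall i, B%:Z <= i -> a i = n) ->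
  exists t (d : nat), step_window a n t d.
Proof.
move=> a_step le_an n_gt0 a_below a_above; have a_mono := step_homo_leq a_step.
have ex_pos : exists m : nat, (0 < a (- B%:Z + m%:Z)%R)%N.
  by exists (2 * B)%N; rewrite a_above //; lia.
case: (ex_minnP ex_pos) => m0 a_m0 min_m0; set t := - B%:Z + m0%:Z.
have ex_full : exists m : nat, (n <= a (t + m%:Z)%R)%N.
  by exists (2 * B)%N; rewrite a_above //; lia.
case: (ex_minnP ex_full) => d a_d min_d; exists t, d; split=> //.
- move=> i lt_it; case: (ltrP i (- B%:Z)) => [/a_below // | /lez_addn[m def_i]].
  apply/eqP; rewrite -leqn0 leqNgt; apply/negP; rewrite def_i => /min_m0.
  by rewrite leqNgt; move: lt_it; rewrite def_i /t; lia.
- move=> i le_di; apply/anti_leq; rewrite le_an; exact: leq_trans a_d (a_mono _ _ le_di).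
- move=> d_gt0; rewrite ltnNge; apply/negP.
  have -> : t + d%:Z - 1 = t + d.-1%:Z by lia.
  by move/min_d; lia.
Qed.

Section MatrixFacts.
Variable k : fieldType.

Lemma mxrank_castmx m n m' n' (e : (m = m') * (n = n')) (A : 'M[k]_(m, n)) :
  \rank (castmx e A) = \rank A.
Proof. by case: e => e1 e2; subst; rewrite castmx_id. Qed.

Lemma castmx_mul_eq0 m1 m2 m3 m1' m2' m3' (e1 : m1 = m1') (e2 e2' : m2 = m2')
    (e3 : m3 = m3') (A : 'M[k]_(m1, m2)) (B : 'M[k]_(m2, m3)) :
  A *m B = 0 -> castmx (e1, e2) A *m castmx (e2', e3) B = 0.
Proof. by subst; rewrite !castmx_id. Qed.

Lemma mxrank_castmx_cap m1 m2 n m1' m2' n' (e1 : m1 = m1') (e2 : m2 = m2')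
    (e e' : n = n') (A : 'M[k]_(m1, n)) (B : 'M[k]_(m2, n)) :
  \rank (castmx (e1, e) A :&: castmx (e2, e') B)%MS = \rank (A :&: B)%MS.
Proof. by subst; rewrite !castmx_id. Qed.

Lemma pinvmx_mulmx_swap m n p q (A : 'M[k]_(m, n)) (B : 'M[k]_(p, q)) X Y :
  row_full A -> row_free B -> A *m X = Y *m B -> pinvmx A *m Y = X *m pinvmx B.
Proof.
move=> fullA freeB eAB.
rewrite -[LHS]mulmx1 -(mulmxVp freeB) !mulmxA -[_ *m Y *m B]mulmxA -eAB.
by rewrite mulmxA mulVpmx ?mul1mx.
Qed.

Lemma castmx1_row_free_full m m' (e : m = m') :
  row_free (castmx (erefl m, e) (1%:M : 'M[k]_m)) &&
  row_full (castmx (erefl m, e) (1%:M : 'M[k]_m)).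
Proof. by subst; rewrite castmx_id /row_free /row_full mxrank1 eqxx. Qed.

Lemma castmx1_mul m p m' p' (e1 : m = m') (e2 : p = p') (A : 'M[k]_(m, p)) :
  castmx (erefl m, e1) 1%:M *m castmx (e1, e2) A = A *m castmx (erefl p, e2) 1%:M.
Proof. by subst; rewrite !castmx_id mul1mx mulmx1. Qed.

End MatrixFacts.

Section RepIso.
Variable k : fieldType.
Implicit Types u v w : zrep k.

Lemma rep_iso_sym u v : rep_iso u v -> rep_iso v u.
Proof.
case=> phi [phi_iso phi_up phi_dn]; exists (fun i => pinvmx (phi i)).
have free_phi i : row_free (phi i) by case/andP: (phi_iso i).
have full_phi i : row_full (phi i) by case/andP: (phi_iso i).
split=> i; first by rewrite pinvmx_free ?pinvmx_full.
- exact: pinvmx_mulmx_swap.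
- exact: pinvmx_mulmx_swap.
Qed.

Lemma rep_iso_trans u v w : rep_iso u v -> rep_iso v w -> rep_iso u w.
Proof.
case=> phi [phi_iso phi_up phi_dn] [chi [chi_iso chi_up chi_dn]].
exists (fun i => phi i *m chi i); split=> i.
- case/andP: (phi_iso i) => free_phi full_phi; case/andP: (chi_iso i) => free_chi full_chi.
  apply/andP; split; first by rewrite /row_free mxrankMfree.
  by rewrite /row_full (eqmxMfull _ full_phi).
- by rewrite -mulmxA chi_up mulmxA phi_up -mulmxA.
- by rewrite -mulmxA chi_dn !mulmxA phi_dn.
Qed.

Lemma rep_iso_mxrank_up u v : rep_iso u v -> forall i, \rank (up u i) = \rank (up v i).
Proof.
case=> phi [phi_iso phi_up _] i; have /andP[_ full_phi] := phi_iso i.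
have /andP[free_phi' _] := phi_iso (i + 1).
by rewrite -(mxrankMfree _ free_phi') -phi_up (eqmxMfull _ full_phi).
Qed.

Lemma mxrank_up_shift u t i : \rank (up (shift u t) i) = \rank (up u (t + i)).
Proof. exact: mxrank_castmx. Qed.

End RepIso.

Section Staircase.
Variable k : fieldType.
Implicit Type r : seq nat.
Local Open Scope nat_scope.

Lemma RsumS r m : Rsum r m.+1 = Rsum r m + nth 0 r m.+1.
Proof. by rewrite /Rsum big_nat_recr. Qed.

Lemma Rsum_mono r m m' : m <= m' -> Rsum r m <= Rsum r m'.
Proof. by move=> lemm'; rewrite /Rsum [X in _ <= X](@big_cat_nat _ _ _ m.+1) ?leq_addr. Qed.

Lemma Rsum_tdeg r m : tdeg r <= m -> Rsum r m = rtot r.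
Proof.
move=> ledm; rewrite /rtot /Rsum (@big_cat_nat _ _ _ (tdeg r).+1) //= -[RHS]addn0.
congr (_ + _); rewrite big_nat_cond big1 // => l /andP[/andP[ledl _] _].
by rewrite nth_default // (leq_trans (leqSpred _)).
Qed.

Lemma Rsum_le_rtot r m : Rsum r m <= rtot r.
Proof.
by case: (leqP (tdeg r) m) => [/Rsum_tdeg -> | /ltnW/Rsum_mono].
Qed.

Definition Rsumz r (i : int) : nat := if i is Posz m then Rsum r m else 0.

Lemma Rsumz_neg r i : (i < 0)%R -> Rsumz r i = 0.
Proof. by case: i. Qed.

Lemma up_diagE r i a : a < rtot r -> up_diag r i a = (a < Rsumz r i).
Proof.
by case: i => [m|m] //= lt_a; case: (leqP (tdeg r) m) => [led|//]; rewrite Rsum_tdeg.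
Qed.

Lemma dn_diagE r i a : dn_diag r i a = ~~ up_diag r i a.
Proof. by case: i => [m|m] //=; case: (leqP (tdeg r) m); rewrite // -leqNgt. Qed.

Lemma up_urep r i : up (urep k r) i = pid_mx (Rsumz r i).
Proof. by apply/matrixP => a b; rewrite !mxE up_diagE. Qed.

Lemma dn_urep r i : dn (urep k r) i = copid_mx (Rsumz r i).
Proof.
apply/matrixP => a b; rewrite !mxE dn_diagE up_diagE // -val_eqE /=.
by case: (a == b :> nat); case: (_ < _); rewrite /= ?subr0 ?subrr.
Qed.

Lemma mxrank_up_urep r i : \rank (up (urep k r) i) = Rsumz r i.
Proof. by rewrite up_urep rank_pid_mx //; case: i => m //=; apply: Rsum_le_rtot. Qed.

Lemma valid_tuple_Rsum0 r : valid_tuple r -> 0 < Rsum r 0.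
Proof. by case/and3P=> _ r0 _; rewrite /Rsum big_nat1 lt0n; case: r r0. Qed.

Lemma valid_tuple_Rsum_inj r1 r2 :
  valid_tuple r1 -> valid_tuple r2 -> (forall m, Rsum r1 m = Rsum r2 m) -> r1 = r2.
Proof.
move=> /and3P[r1_gt0 _ last_r1] /and3P[r2_gt0 _ last_r2] eqR.
have eq_nth m : nth 0 r1 m = nth 0 r2 m.
  case: m => [|m]; first by have := eqR 0; rewrite /Rsum !big_nat1.
  by have /eqP := eqR m.+1; rewrite !RsumS eqR eqn_add2l => /eqP.
have eq_size : size r1 = size r2.
  rewrite -nth_last in last_r1; rewrite -nth_last in last_r2.
  apply/anti_leq/andP; split; rewrite leqNgt; apply/negP => lt_size.
  - by move: last_r1; rewrite eq_nth nth_default //; case: (size r1) lt_size.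
  - by move: last_r2; rewrite -eq_nth nth_default //; case: (size r2) lt_size.
by apply: (eq_from_nth (x0 := 0)) => // m _.
Qed.

Lemma valid_tuple_Rsumz_inj r1 r2 (s1 s2 : int) :
  valid_tuple r1 -> valid_tuple r2 ->
  (forall i, Rsumz r1 (s1 + i)%R = Rsumz r2 (s2 + i)%R) -> r1 = r2.
Proof.
move=> valid_r1 valid_r2 eqR.
have shift_ge r r' s s' : valid_tuple r' ->
    (forall i, Rsumz r (s + i)%R = Rsumz r' (s' + i)%R) -> (s' <= s)%R.
  move=> valid_r' eqRr; rewrite leNgt; apply/negP => lt_ss'.
  have := eqRr (- s')%R; rewrite subrr Rsumz_neg ?subr_lt0 //= => Rsum0.
  by have := valid_tuple_Rsum0 valid_r'; rewrite -Rsum0.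
have eq_s : s1 = s2.
  by apply/le_anti; rewrite (shift_ge r1 r2 s1 s2) // (shift_ge r2 r1 s2 s1).
apply: valid_tuple_Rsum_inj => // m; have := eqR (m%:Z - s1)%R.
by rewrite eq_s addrC subrK.
Qed.

End Staircase.

Section BlockEmbedding.
Variables (k : fieldType) (N : nat).
Local Open Scope nat_scope.

Definition block_emb (o c : nat) : 'M[k]_(N, c) := \matrix_(x, b) ((x : nat) == o + b)%:R.

Lemma tr_block_emb_mulE o c o' c' b b' :
  ((block_emb o c)^T *m block_emb o' c') b b' = ((o + b == o' + b') && (o + b < N))%:R.
Proof.
rewrite !mxE; case: (ltnP (o + b) N) => [lt_obN | le_Nob].
  rewrite (bigD1 (Ordinal lt_obN)) //= big1 ?addr0 => [|x neq_x].
    by rewrite !mxE eqxx mul1r andbT.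
  rewrite !mxE; suff -> : ((x : nat) == o + b) = false by rewrite mul0r.
  by apply: contraNF neq_x => /eqP eq_x; apply/eqP/val_inj.
rewrite andbF big1 // => x _; rewrite !mxE.
suff -> : ((x : nat) == o + b) = false by rewrite mul0r.
by apply/negbTE; rewrite neq_ltn (leq_trans (ltn_ord x) le_Nob).
Qed.

Lemma tr_block_emb_mul_id o c : o + c <= N -> (block_emb o c)^T *m block_emb o c = 1%:M.
Proof.
move=> le_ocN; apply/matrixP => b b'; rewrite tr_block_emb_mulE !mxE eqn_add2l.
by rewrite (leq_trans _ le_ocN) ?ltn_add2l // andbT.
Qed.

Lemma tr_block_emb_mul_disjoint o c o' c' : (o + c <= o') || (o' + c' <= o) ->
  (block_emb o c)^T *m block_emb o' c' = 0%R.
Proof.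
move=> disj; apply/matrixP => b b'; rewrite tr_block_emb_mulE mxE.
suff -> : (o + b == o' + b') = false by [].
apply/negbTE; rewrite neq_ltn; case/orP: disj => le_oo'; apply/orP.
- by left; rewrite (leq_trans _ (leq_trans le_oo' (leq_addr _ _))) ?ltn_add2l.
- by right; rewrite (leq_trans _ (leq_trans le_oo' (leq_addr _ _))) ?ltn_add2l.
Qed.

Lemma pid_mx_mul_block_embE m o c x b :
  ((pid_mx m : 'M[k]_N) *m block_emb o c) x b = ((x < m) && ((x : nat) == o + b))%:R.
Proof.
rewrite !mxE (bigD1 x) //= big1 ?addr0 => [|y neq_yx]; rewrite !mxE.
  by rewrite eqxx /=; case: (x < m); rewrite ?mul1r ?mul0r.
suff -> : ((x : nat) == y) = false by rewrite mul0r.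
by apply/negbTE; rewrite eq_sym.
Qed.

Lemma pid_mx_mul_block_emb m o c :
  o + c <= m -> (pid_mx m : 'M[k]_N) *m block_emb o c = block_emb o c.
Proof.
move=> le_ocm; apply/matrixP => x b; rewrite pid_mx_mul_block_embE mxE.
by case: eqP => [->|]; rewrite ?andbF // (leq_trans _ le_ocm) ?ltn_add2l.
Qed.

Lemma pid_mx_mul_block_emb0 m o c : m <= o -> (pid_mx m : 'M[k]_N) *m block_emb o c = 0%R.
Proof.
move=> le_mo; apply/matrixP => x b; rewrite pid_mx_mul_block_embE mxE.
by case: eqP => [->|]; rewrite ?andbF // ltnNge (leq_trans le_mo (leq_addr _ _)).
Qed.

End BlockEmbedding.

Section ConstantDimensionChain.
Variables (k : fieldType) (n : nat) (f g : int -> 'M[k]_n).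
Hypothesis fg0 : forall i, f i *m g i = 0.
Hypothesis gf0 : forall i, g i *m f i = 0.
Hypothesis mxrank_g : forall i, \rank (g i) = (n - \rank (f i))%N.
Hypothesis f_cap_g : forall i, \rank (f i :&: g (i + 1))%MS = 0%N.

Local Notation a i := (\rank (f i)).

Lemma mxrank_f_add_g i : \rank (f i + g (i + 1))%MS = (a i + (n - a (i + 1)))%N.
Proof. by have := mxrank_sum_cap (f i) (g (i + 1)); rewrite f_cap_g addn0 mxrank_g. Qed.

Lemma mxrank_f_step i : (a i <= a (i + 1))%N.
Proof.
have := rank_leq_col (f i + g (i + 1))%MS; rewrite mxrank_f_add_g.
have := rank_leq_row (f (i + 1)); lia.
Qed.

Fixpoint fpath (j : int) (m : nat) : 'M[k]_n :=
  if m is m'.+1 then fpath j m' *m f (j + m'%:Z) else 1%:M.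

Fixpoint gpath (i : int) (m : nat) : 'M[k]_n :=
  if m is m'.+1 then g (i + m'%:Z) *m gpath i m' else 1%:M.

Definition transport (j i : int) : 'M[k]_n :=
  if j <= i then fpath j `|i - j|%N else gpath i `|j - i|%N.

Lemma gpathS i m : gpath i m.+1 = gpath (i + 1) m *m g i.
Proof.
elim: m i => [|m IHm] i /=; first by rewrite addr0 mulmx1 mul1mx.
by rewrite -/(gpath i m.+1) IHm mulmxA; congr (g _ *m _ *m _); lia.
Qed.

Lemma transport_fpath j m : transport j (j + m%:Z) = fpath j m.
Proof. by rewrite /transport ifT; [congr fpath; lia | lia]. Qed.

Lemma transport_gpath i m : transport (i + m%:Z) i = gpath i m.
Proof.
case: m => [|m]; first by rewrite addr0 /transport lexx subrr.
by rewrite /transport ifF; [congr gpath; lia | lia].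
Qed.

Lemma transport_id j : transport j j = 1%:M.
Proof. by have := transport_gpath j 0; rewrite addr0. Qed.

Lemma transport_mul_f j i : transport j i *m f i = if j <= i then transport j (i + 1) else 0.
Proof.
case: ifP => [/lez_addn[m ->] | /negbT]; first by rewrite addz_S !transport_fpath.
rewrite -ltNge -lezD1 => /lez_addn[m ->].
by rewrite -addrA -PoszD add1n transport_gpath gpathS -mulmxA gf0 mulmx0.
Qed.

Lemma transport_mul_g j i :
  transport j (i + 1) *m g i = if j <= i then 0 else transport j i.
Proof.
case: ifP => [/lez_addn[m ->] | /negbT].
  by rewrite addz_S transport_fpath /= -mulmxA fg0 mulmx0.
rewrite -ltNge -lezD1 => /lez_addn[m ->].
by rewrite transport_gpath -addrA -PoszD add1n transport_gpath gpathS.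
Qed.

(* The l-th coordinate block of u(r) spans, at vertex l, a complement of
   Im u^(l-1) + Im u_l; [gens i] is such a complement in U_i. *)
Definition gens i := ((f (i - 1) + g i)^C)%MS.

Lemma mxrank_gens i : \rank (gens i) = (a i - a (i - 1))%N.
Proof.
rewrite mxrank_compl; have := mxrank_f_add_g (i - 1); rewrite subrK => ->.
have := mxrank_f_step (i - 1); rewrite subrK; have := rank_leq_row (f i); lia.
Qed.

Variables (t : int) (d : nat).
Hypothesis f_window : step_window (fun i => a i) n t d.

Let mxrank_f_below i : i < t -> a i = 0%N. Proof. by case: f_window => + _ _ _; apply. Qed.
Let mxrank_f_start : (0 < a t)%N. Proof. by case: f_window. Qed.
Let mxrank_f_above i : t + d%:Z <= i -> a i = n. Proof. by case: f_window => _ _ + _; apply. Qed.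
Let mxrank_f_last : (0 < d)%N -> (a (t + d%:Z - 1) < n)%N. Proof. by case: f_window. Qed.

Definition rseq := mkseq (fun l => \rank (gens (t + l%:Z))) d.+1.

Definition offset (l : nat) := (\sum_(0 <= m < l) nth 0 rseq m)%N.

Lemma nth_rseq l : (l < d.+1)%N -> nth 0%N rseq l = \rank (gens (t + l%:Z)).
Proof. by move=> lt_ld; rewrite nth_mkseq. Qed.

Lemma offsetS l : offset l.+1 = (offset l + nth 0 rseq l)%N.
Proof. by rewrite /offset big_nat_recr. Qed.

Lemma offset_mono l l' : (l <= l')%N -> (offset l <= offset l')%N.
Proof. by move=> le_ll'; rewrite /offset [X in (_ <= X)%N](@big_cat_nat _ _ _ l) ?leq_addr. Qed.

Lemma offset_mxrank_f l : (l <= d.+1)%N -> offset l = a (t + l%:Z - 1).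
Proof.
elim: l => [_|l IHl lt_ld]; first by rewrite /offset big_geq // mxrank_f_below //; lia.
rewrite offsetS (IHl (ltnW lt_ld)) nth_rseq // mxrank_gens.
have -> : t + l.+1%:Z - 1 = t + l%:Z by lia.
by apply: subnKC; have := mxrank_f_step (t + l%:Z - 1); rewrite subrK.
Qed.

Lemma tdeg_rseq : tdeg rseq = d.
Proof. by rewrite /tdeg size_mkseq. Qed.

Lemma rtot_rseq : rtot rseq = n.
Proof.
rewrite /rtot tdeg_rseq; change (offset d.+1 = n).
by rewrite offset_mxrank_f // mxrank_f_above //; lia.
Qed.

Lemma valid_rseq : valid_tuple rseq.
Proof.
apply/and3P; split; first by rewrite size_mkseq.
- rewrite -nth0 nth_rseq // mxrank_gens addr0 (mxrank_f_below (i := t - 1)) ?subn0 -?lt0n //.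
  lia.
- rewrite -nth_last size_mkseq nth_rseq // mxrank_gens mxrank_f_above // -lt0n subn_gt0.
  case: (posnP d) => [d0|/mxrank_f_last //].
  rewrite d0 addr0 mxrank_f_below ?subn0; last lia.
  exact: leq_trans mxrank_f_start (rank_leq_row _).
Qed.

Lemma offset_le_Rsumz (l : nat) i : l%:Z <= i -> (offset l.+1 <= Rsumz rseq i)%N.
Proof. by case: i => // m; rewrite lez_nat => le_lm; apply: offset_mono. Qed.

Lemma Rsumz_le_offset (l : nat) i : i < l%:Z -> (Rsumz rseq i <= offset l)%N.
Proof. by case: i => // m; rewrite ltz_nat => lt_ml; apply: offset_mono. Qed.

Lemma offset_block_end (l : 'I_d.+1) :
  (offset l + \rank (gens (t + l%:Z)))%N = offset l.+1.
Proof. by rewrite offsetS nth_rseq. Qed.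

Lemma offset_le_rtot (l : 'I_d.+1) : (offset l.+1 <= rtot rseq)%N.
Proof. by rewrite /rtot tdeg_rseq; apply: offset_mono. Qed.

Definition blk (l : 'I_d.+1) : 'M[k]_(rtot rseq, \rank (gens (t + l%:Z))) :=
  block_emb k (rtot rseq) (offset l) _.

Lemma pid_mx_mul_blk (l : 'I_d.+1) i :
  pid_mx (Rsumz rseq i) *m blk l = if l%:Z <= i then blk l else 0.
Proof.
case: ifP => [le_li | /negbT].
  by apply: pid_mx_mul_block_emb; rewrite offset_block_end offset_le_Rsumz.
by rewrite -ltNge => lt_il; apply/pid_mx_mul_block_emb0/Rsumz_le_offset.
Qed.

Lemma copid_mx_mul_blk (l : 'I_d.+1) i :
  copid_mx (Rsumz rseq i) *m blk l = if l%:Z <= i then 0 else blk l.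
Proof. by rewrite mulmxBl mul1mx pid_mx_mul_blk; case: ifP; rewrite ?subrr ?subr0. Qed.

Definition psi i : 'M[k]_(rtot rseq, n) :=
  \sum_(l < d.+1) blk l *m row_base (gens (t + l%:Z)) *m transport (t + l%:Z) i.

Lemma psi_mul_f i : psi i *m f i = up (urep k rseq) (- t + i) *m psi (i + 1).
Proof.
rewrite up_urep /psi mulmx_suml mulmx_sumr; apply: eq_bigr => l _.
rewrite -mulmxA transport_mul_f !mulmxA pid_mx_mul_blk.
have -> : (t + l%:Z <= i) = (l%:Z <= - t + i) by lia.
by case: ifP; rewrite ?mul0mx ?mulmx0.
Qed.

Lemma psi_mul_g i : psi (i + 1) *m g i = dn (urep k rseq) (- t + i) *m psi i.
Proof.
rewrite dn_urep /psi mulmx_suml mulmx_sumr; apply: eq_bigr => l _.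
rewrite -mulmxA transport_mul_g !mulmxA copid_mx_mul_blk.
have -> : (t + l%:Z <= i) = (l%:Z <= - t + i) by lia.
by case: ifP; rewrite ?mul0mx ?mulmx0.
Qed.

Lemma tr_blk_mul_psi (l : 'I_d.+1) i :
  (blk l)^T *m psi i = row_base (gens (t + l%:Z)) *m transport (t + l%:Z) i.
Proof.
rewrite /psi mulmx_sumr (bigD1 l) //= big1 ?addr0 => [|m neq_ml]; rewrite !mulmxA.
  by rewrite tr_block_emb_mul_id ?mul1mx // offset_block_end offset_le_rtot.
rewrite tr_block_emb_mul_disjoint ?mul0mx // !offset_block_end.
case: (ltngtP l m) => [lt_lm | lt_ml | /val_inj eq_lm].
- by rewrite offset_mono.
- by rewrite orbC offset_mono.
- by rewrite eq_lm eqxx in neq_ml.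
Qed.

Lemma gens_eq0 i : (i < t) || (t + d%:Z < i) -> gens i = 0.
Proof.
move=> out; apply/eqP; rewrite -mxrank_eq0 mxrank_gens.
case/orP: out => [lt_it | lt_di]; first by rewrite mxrank_f_below.
by rewrite !mxrank_f_above ?subnn //; lia.
Qed.

Lemma sub1mx_f_g_gens i : (1%:M <= f (i - 1) + g i + gens i)%MS.
Proof. by rewrite sub1mx addsmx_compl_full. Qed.

Lemma gens_sub_psi i : (gens i <= psi i)%MS.
Proof.
have [/andP[le_ti le_id] | out] := boolP ((t <= i) && (i <= t + d%:Z)); last first.
  by rewrite gens_eq0 ?sub0mx //; move: out; rewrite negb_and -!ltNge.
have [l def_i] := lez_addn le_ti.
have lt_ld : (l < d.+1)%N by move: le_id; rewrite def_i; lia.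
apply: submx_trans (submxMl (blk (Ordinal lt_ld))^T (psi i)).
by rewrite tr_blk_mul_psi /= -def_i transport_id mulmx1 eq_row_base.
Qed.

Lemma f_sub_psi i : (f (i - 1) <= psi i)%MS.
Proof.
move: i; apply: (int_ind_up (K := t)) => [i le_it | i IHi].
  suff -> : f (i - 1) = 0 by rewrite sub0mx.
  by apply/eqP; rewrite -mxrank_eq0 mxrank_f_below //; lia.
rewrite addrK; apply: submx_trans (_ : psi i *m f i <= _)%MS; last first.
  by rewrite psi_mul_f submxMl.
rewrite -[X in (X <= _)%MS]mul1mx; apply: submx_trans (submxMr (f i) (sub1mx_f_g_gens i)) _.
rewrite addsmxMr addsmx_sub addsmxMr addsmx_sub gf0 sub0mx andbT.
by rewrite !submxMr ?IHi ?gens_sub_psi.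
Qed.

Lemma g_sub_psi i : (g i <= psi i)%MS.
Proof.
move: i; apply: (int_ind_down (K := t + d%:Z)) => [i le_di | i IHi].
  suff -> : g i = 0 by rewrite sub0mx.
  by apply/eqP; rewrite -mxrank_eq0 mxrank_g mxrank_f_above ?subnn.
apply: submx_trans (_ : psi (i + 1) *m g i <= _)%MS; last first.
  by rewrite psi_mul_g submxMl.
have := sub1mx_f_g_gens (i + 1); rewrite addrK => full_i.
rewrite -[X in (X <= _)%MS]mul1mx; apply: submx_trans (submxMr (g i) full_i) _.
rewrite addsmxMr addsmx_sub addsmxMr addsmx_sub fg0 sub0mx /=.
by rewrite !submxMr ?IHi ?gens_sub_psi.
Qed.

Lemma psi_full i : row_full (psi i).
Proof.
rewrite -sub1mx; apply: submx_trans (sub1mx_f_g_gens i) _.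
by rewrite !addsmx_sub f_sub_psi g_sub_psi gens_sub_psi.
Qed.

Lemma psi_free i : row_free (psi i).
Proof. by have := psi_full i; rewrite /row_free /row_full => /eqP ->; rewrite rtot_rseq. Qed.

Lemma constant_chain_iso_urep :
  rep_iso (shift (urep k rseq) (- t)) (@ZRep k (fun=> n) f g).
Proof.
exists psi; split=> i /=; first by rewrite psi_free psi_full.
- by rewrite castmx_id psi_mul_f.
- by rewrite castmx_id psi_mul_g.
Qed.

End ConstantDimensionChain.

Section FiniteSupport.
Variables (k : fieldType) (u : zrep k).

Lemma mxrank_dnpath i m : (\rank (dnpath u i m.+1) <= \rank (dn u i))%N.
Proof.
rewrite -[in X in (_ <= X)%N](addr0 i); elim: m => [|m IHm].
  by rewrite /= mxrank_castmx mxrankM_maxl.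
by apply: leq_trans IHm; rewrite [dnpath _ _ m.+2]/= mxrank_castmx mxrankM_maxr.
Qed.

Lemma row_full_dnpath i m : row_full (dnpath u i m.+1) -> row_full (dn u i).
Proof.
rewrite /row_full => /eqP full_path.
by rewrite eqn_leq rank_leq_col -{1}full_path mxrank_dnpath.
Qed.

Lemma row_full_uppath j m : row_full (uppath u j m.+1) -> row_full (up u (j + m%:Z)).
Proof.
rewrite /row_full /= mxrank_castmx -addz_S => /eqP full_path.
by rewrite eqn_leq rank_leq_col -{1}full_path mxrankM_maxr.
Qed.

Lemma finite_support_row_full : finite_support u ->
  exists B : nat, (forall i, i < - B%:Z -> row_full (dn u i)) /\
                  (forall i, B%:Z <= i -> row_full (up u i)).
Proof.
case=> H cover; exists (\max_(j <- H) `|j|%N).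
set B := \max_(j <- H) `|j|%N.
have bound j : j \in H -> - B%:Z <= j <= B%:Z.
  move=> jH; have : (`|j|%N <= B)%N by apply: (@leq_bigmax_seq _ _ predT).
  by rewrite -lez_nat abszE ler_norml.
split=> i ltBi.
- have [j /bound Bj [[|m] [[def_i _] | [def_j]]]] := cover i; try by exfalso; lia.
  exact: row_full_dnpath.
- have [j /bound Bj [[|m] [[def_i] | [def_j _]]]] := cover (i + 1); try by exfalso; lia.
  by move/row_full_uppath; have -> : j + m%:Z = i by lia.
Qed.

End FiniteSupport.

Section LinkedExactChain.
Variables (k : fieldType) (u : zrep k).
Hypothesis u_linked : linked_chain u.
Hypothesis u_exact : exact_rep u.

Lemma mxrank_up_add_dn i : (\rank (up u i) + \rank (dn u i))%N = Defs.dim u i.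
Proof.
have := eqmx_rank (u_exact i).1; rewrite mxrank_ker.
have := rank_leq_row (up u i); lia.
Qed.

Lemma mxrank_up_add_dn_succ i : (\rank (up u i) + \rank (dn u i))%N = Defs.dim u (i + 1).
Proof.
have := eqmx_rank (u_exact i).2; rewrite mxrank_ker.
have := rank_leq_row (dn u i); lia.
Qed.

Lemma dim_const i : Defs.dim u i = Defs.dim u 0.
Proof.
apply: (step_invariant_const (f := Defs.dim u)) => j.
by rewrite -mxrank_up_add_dn_succ mxrank_up_add_dn.
Qed.

Lemma mxrank_up_cap_dn i : \rank (up u i :&: dn u (i + 1))%MS = 0%N.
Proof.
case: u_linked => _ _ ker_cap; apply/eqP; rewrite -leqn0 -(ker_cap i).
by apply/mxrankS/capmxS; [case/andP: (u_exact i).2 | case/andP: (u_exact (i + 1)).1].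
Qed.

Definition up_const i : 'M[k]_(Defs.dim u 0) :=
  castmx (dim_const i, dim_const (i + 1)) (up u i).
Definition dn_const i : 'M[k]_(Defs.dim u 0) :=
  castmx (dim_const (i + 1), dim_const i) (dn u i).

Lemma rep_iso_const_dim : rep_iso u (@ZRep k (fun=> Defs.dim u 0) up_const dn_const).
Proof.
exists (fun i => castmx (erefl (Defs.dim u i), dim_const i) 1%:M).
by split=> i; rewrite ?castmx1_row_free_full ?castmx1_mul.
Qed.

Lemma mxrank_up_const i : \rank (up_const i) = \rank (up u i).
Proof. exact: mxrank_castmx. Qed.

Lemma up_dn_const0 i : up_const i *m dn_const i = 0.
Proof. by case: u_linked => updn0 _ _; apply: castmx_mul_eq0. Qed.

Lemma dn_up_const0 i : dn_const i *m up_const i = 0.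
Proof. by case: u_linked => _ dnup0 _; apply: castmx_mul_eq0. Qed.

Lemma mxrank_dn_const i : \rank (dn_const i) = (Defs.dim u 0 - \rank (up_const i))%N.
Proof.
rewrite mxrank_up_const mxrank_castmx.
move: (mxrank_up_add_dn i) (dim_const i).
set a := \rank (up u i); set b := \rank (dn u i); lia.
Qed.

Lemma mxrank_up_cap_dn_const i : \rank (up_const i :&: dn_const (i + 1))%MS = 0%N.
Proof. by rewrite mxrank_castmx_cap mxrank_up_cap_dn. Qed.

Lemma linked_exact_equivalent_urep : nontrivial u -> finite_support u ->
  exists2 r, valid_tuple r & equivalent u (urep k r).
Proof.
move=> u_nontriv /finite_support_row_full[B [dn_full up_full]].
have up_const_step i : (\rank (up_const i) <= \rank (up_const (i + 1)))%N.
  exact: mxrank_f_step mxrank_dn_const mxrank_up_cap_dn_const i.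
have up_const_below i : i < - B%:Z -> \rank (up_const i) = 0%N.
  move/dn_full/eqP => full_dn; move: (mxrank_up_add_dn i); rewrite mxrank_up_const full_dn.
  set a := \rank (up u i); lia.
have up_const_above i : B%:Z <= i -> \rank (up_const i) = Defs.dim u 0.
  by move/up_full/eqP; rewrite mxrank_up_const -(dim_const (i + 1)).
have dim_gt0 : (0 < Defs.dim u 0)%N by rewrite lt0n u_nontriv.
have [t [d window]] :=
  exists_step_window up_const_step (fun i => rank_leq_row (up_const i)) dim_gt0
                     up_const_below up_const_above.
exists (rseq up_const dn_const t d).
  exact: (valid_rseq mxrank_dn_const mxrank_up_cap_dn_const window).
exists (- t); apply: rep_iso_trans rep_iso_const_dim (rep_iso_sym _).
exact: (constant_chain_iso_urep up_dn_const0 dn_up_const0 mxrank_dn_const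
                                mxrank_up_cap_dn_const window).
Qed.

End LinkedExactChain.

Lemma equivalent_urep_inj (k : fieldType) (u : zrep k) r1 r2 :
  valid_tuple r1 -> valid_tuple r2 ->
  equivalent u (urep k r1) -> equivalent u (urep k r2) -> r1 = r2.
Proof.
move=> valid_r1 valid_r2 [s1 iso1] [s2 iso2].
apply: (valid_tuple_Rsumz_inj (s1 := s1) (s2 := s2)) => // i.
rewrite -!(mxrank_up_urep k) -!mxrank_up_shift.
by rewrite -(rep_iso_mxrank_up iso1) (rep_iso_mxrank_up iso2).
Qed.

Theorem proposition3p2 (k : fieldType) (u : zrep k) :
  linked_chain u -> exact_rep u -> nontrivial u -> finite_support u ->
  exists! r : seq nat, valid_tuple r /\ equivalent u (urep k r).
Proof.
move=> u_linked u_exact u_nontriv u_fin.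
have [r valid_r equiv_r] := linked_exact_equivalent_urep u_linked u_exact u_nontriv u_fin.
exists r; split=> // r' [valid_r' equiv_r'].
exact: equivalent_urep_inj valid_r valid_r' equiv_r equiv_r'.
Qed.
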